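(* Consider the extreme Reissner–Nordström case $a=0$, $Q\neq0$, $M=\rho=|Q|$. Then for every half-integer $k$ and all $m>0$, $e\in\mathbb{R}$, there is no energy eigenvalue $\omega\in\mathbb{R}$; i.e., bound state solutions of the Dirac equation (of the separated form considered) do not exist in the extreme Reissner–Nordström geometry.
   Context: Fix real numbers $M>0$, $a$, $Q$ with $M^2=a^2+Q^2$ and put $\rho:=M$. Fix the rest mass $m>0$ and charge $e\in\mathbb{R}$ of a Dirac particle and a half-integer $k\in\{\pm\frac12,\pm\frac32,\dots\}$. For $\omega,\lambda\in\mathbb{R}$ consider the radial system for $f:(\rho,\infty)\to\mathbb{C}^2$, $$\begin{pmatrix}(r-\rho)\frac{d}{dr}+\frac{iV(r)}{r-\rho} & imr-\lambda\\ -imr-\lambda & (r-\rho)\frac{d}{dr}-\frac{iV(r)}{r-\rho}\end{pmatrix}f(r)=0,\qquad V(r):=\omega(r^2+a^2)+ka+eQr,$$ and the angular system for $g:(0,\pi)\to\mathbb{C}^2$, $$\begin{pmatrix}\frac{d}{d\theta}+\frac{\cot\theta}{2}-W(\theta) & -am\cos\theta+\lambda\\ am\cos\theta+\lambda & -\frac{d}{d\theta}-\frac{\cot\theta}{2}-W(\theta)\end{pmatrix}g(\theta)=0,\qquad W(\theta):=a\omega\sin\theta+\frac{k}{\sin\theta}.$$ A number $\omega\in\mathbb{R}$ is called an energy eigenvalue (for azimuthal quantum number $k$) if there exist $\lambda\in\mathbb{R}$ and nontrivial solutions $f$ of the radial system and $g$ of the angular system with $$\int_\rho^\infty|f(r)|^2\frac{r^2+a^2}{(r-\rho)^2}\,dr<\infty,\qquad\int_0^\pi|g(\theta)|^2\sin\theta\,d\theta<\infty.$$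 *)

From Stdlib Require Import Reals ZArith.
From Coquelicot Require Import Coquelicot.
Open Scope R_scope.

Definition half_integer (k : R) : Prop := exists z : Z, k = IZR z + / 2.

Definition Vpot (a Q omega k e : R) (r : R) : R :=
  omega * (r ^ 2 + a ^ 2) + k * a + e * Q * r.

Definition Wpot (a omega k : R) (th : R) : R :=
  a * omega * sin th + k / sin th.

Definition radial_solution (rho a Q m e k omega lambda : R) (f : R -> C * C) : Prop :=
  forall r, rho < r ->
  exists d1 d2 : C,
    is_derive (fun s => fst (f s)) r d1 /\
    is_derive (fun s => snd (f s)) r d2 /\
    let V := Vpot a Q omega k e r in
    (RtoC (r - rho) * d1 + Ci * RtoC (V / (r - rho)) * fst (f r)
       + (Ci * RtoC (m * r) - RtoC lambda) * snd (f r) = 0)%C /\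
    ((- (Ci * RtoC (m * r)) - RtoC lambda) * fst (f r)
       + RtoC (r - rho) * d2 - Ci * RtoC (V / (r - rho)) * snd (f r) = 0)%C.

Definition angular_solution (a m k omega lambda : R) (g : R -> C * C) : Prop :=
  forall th, 0 < th < PI ->
  exists d1 d2 : C,
    is_derive (fun s => fst (g s)) th d1 /\
    is_derive (fun s => snd (g s)) th d2 /\
    let W := Wpot a omega k th in
    let ct := cos th / sin th in
    (d1 + RtoC (ct / 2) * fst (g th) - RtoC W * fst (g th)
       + RtoC (- (a * m * cos th) + lambda) * snd (g th) = 0)%C /\
    (RtoC (a * m * cos th + lambda) * fst (g th)
       - d2 - RtoC (ct / 2) * snd (g th) - RtoC W * snd (g th) = 0)%C.

Definition normsq2 (v : C * C) : R := (Cmod (fst v)) ^ 2 + (Cmod (snd v)) ^ 2.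

Definition radial_L2 (rho a : R) (f : R -> C * C) : Prop :=
  ex_RInt_gen (fun r => normsq2 (f r) * (r ^ 2 + a ^ 2) / (r - rho) ^ 2)
    (at_right rho) (Rbar_locally p_infty).

Definition angular_L2 (g : R -> C * C) : Prop :=
  ex_RInt_gen (fun th => normsq2 (g th) * sin th) (at_right 0) (at_left PI).

Definition energy_eigenvalue (M a Q m e k omega : R) : Prop :=
  let rho := M in
  exists (lambda : R) (f g : R -> C * C),
    radial_solution rho a Q m e k omega lambda f /\
    (exists r, rho < r /\ f r <> (RtoC 0, RtoC 0)) /\
    radial_L2 rho a f /\
    angular_solution a m k omega lambda g /\
    (exists th, 0 < th < PI /\ g th <> (RtoC 0, RtoC 0)) /\
    angular_L2 g.

From Stdlib Require Import Reals ZArith Lra Lia.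
From Coquelicot Require Import Coquelicot.
Open Scope R_scope.

(* With [a = 0] and [lambda = 0] the angular system decouples, and each [|g_i|^2 sin theta] behaves
   like [tan (theta / 2) ^ (+- 2 k)]; since [|2 k| >= 1] one of them is not integrable at [0] or at
   [PI], so [lambda <> 0].
   For the radial system, [A = |f1|^2 + |f2|^2] and [B1 + i B2 = f1 * conj f2] satisfy a real linear
   system with [B1^2 + B2^2 <= A^2 / 4], and square integrability forbids [A] to stay bounded away
   from zero near the horizon [r = rho] or at infinity. A Gronwall argument contradicts this:
   - if [V(rho) <> 0], [V A + (r - rho) (2 lambda B2 + 2 m r B1)] is comparable to [A] near [rho]
     and its derivative is bounded by a multiple of [A], so [A] cannot decay at the horizon;
   - if [V(rho) = 0], then [V / (r - rho) = omega r]; for [|omega| <= m] the quantity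
     [lambda (2 m B1 + omega A)] is monotone and dominated by [A], hence zero, which forces [A = 0];
   - for [|omega| > m], [omega (2 m B1 + omega A) + 2 omega lambda B2 / r] is comparable to [A] at
     infinity with derivative [O(A / r^2)], so [A] cannot decay at infinity. *)

(** * Differential inequalities *)

Lemma is_derive_Rplus (f g : R -> R) (x df dg : R) :
  is_derive f x df -> is_derive g x dg -> is_derive (fun t => f t + g t) x (df + dg).
Proof. exact (is_derive_plus f g x df dg). Qed.

Lemma is_derive_Rmult (f g : R -> R) (x df dg : R) :
  is_derive f x df -> is_derive g x dg ->
  is_derive (fun t => f t * g t) x (df * g x + f x * dg).
Proof. intros Hf Hg. exact (is_derive_mult f g x df dg Hf Hg Rmult_comm). Qed.

Lemma is_derive_Ropp (f : R -> R) (x df : R) :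
  is_derive f x df -> is_derive (fun t => - f t) x (- df).
Proof. exact (is_derive_opp f x df). Qed.

Lemma is_derive_replace (f : R -> R) (x l l' : R) :
  is_derive f x l -> l = l' -> is_derive f x l'.
Proof. now intros H <-. Qed.

Lemma is_derive_scal_id (c x : R) : is_derive (fun t => c * t) x c.
Proof.
  eapply is_derive_replace; [apply is_derive_scal, is_derive_id|]. unfold one; simpl; ring.
Qed.

Lemma exp_le_compat (x y : R) : x <= y -> exp x <= exp y.
Proof. intros [H| ->]; [now apply Rlt_le, exp_increasing | apply Rle_refl]. Qed.

Lemma nondecreasing_of_derive (g dg : R -> R) (a b : R) : a <= b ->
  (forall t, a <= t <= b -> is_derive g t (dg t)) ->
  (forall t, a <= t <= b -> 0 <= dg t) -> g a <= g b.
Proof.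
  intros Hab Hd Hpos.
  destruct (MVT_gen g a b dg) as [c [Hc Hmvt]];
    rewrite ?Rmin_left, ?Rmax_right in * by lra.
  - intros t Ht; apply Hd; lra.
  - intros t Ht. apply continuity_pt_filterlim, (ex_derive_continuous g).
    exists (dg t); apply Hd; lra.
  - assert (0 <= dg c * (b - a)) by (apply Rmult_le_pos; [apply Hpos|]; lra).
    lra.
Qed.

Lemma exp_weighted_nondecreasing (g dg phi dphi : R -> R) (a b : R) : a <= b ->
  (forall t, a <= t <= b -> is_derive g t (dg t)) ->
  (forall t, a <= t <= b -> is_derive phi t (dphi t)) ->
  (forall t, a <= t <= b -> 0 <= dg t + dphi t * g t) ->
  g a * exp (phi a) <= g b * exp (phi b).
Proof.
  intros Hab Hg Hphi Hpos.
  apply (nondecreasing_of_derive (fun t => g t * exp (phi t))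
           (fun t => (dg t + dphi t * g t) * exp (phi t))); auto.
  - intros t Ht. eapply is_derive_replace.
    + apply is_derive_Rmult; [now apply Hg|].
      exact (is_derive_comp exp phi t _ _ (is_derive_exp _) (Hphi t Ht)).
    + unfold scal; simpl; unfold mult; simpl; ring.
  - intros t Ht. apply Rmult_le_pos; [now apply Hpos | apply Rlt_le, exp_pos].
Qed.

Lemma gronwall_forward (g dg : R -> R) (a b C : R) : a <= b ->
  (forall t, a <= t <= b -> is_derive g t (dg t)) ->
  (forall t, a <= t <= b -> - (C * g t) <= dg t) ->
  g a * exp (- (C * (b - a))) <= g b.
Proof.
  intros Hab Hg Hlow.
  apply (Rmult_le_reg_r (exp (C * b))); [apply exp_pos|].
  rewrite Rmult_assoc, <- exp_plus. replace (- (C * (b - a)) + C * b) with (C * a) by ring.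
  apply (exp_weighted_nondecreasing g dg (fun t => C * t) (fun _ => C)); auto.
  - intros; apply is_derive_scal_id.
  - intros t Ht; specialize (Hlow t Ht); lra.
Qed.

Lemma gronwall_backward (g dg : R -> R) (a b C : R) : a <= b ->
  (forall t, a <= t <= b -> is_derive g t (dg t)) ->
  (forall t, a <= t <= b -> dg t <= C * g t) ->
  g b * exp (- (C * (b - a))) <= g a.
Proof.
  intros Hab Hg Hup.
  apply (Rmult_le_reg_r (exp (- C * a))); [apply exp_pos|].
  rewrite Rmult_assoc, <- exp_plus. replace (- (C * (b - a)) + - C * a) with (- C * b) by ring.
  assert (- g a * exp (- C * a) <= - g b * exp (- C * b)); [|lra].
  apply (exp_weighted_nondecreasing (fun t => - g t) (fun t => - dg t)
           (fun t => - C * t) (fun _ => - C)); auto.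
  - intros; apply is_derive_Ropp, Hg; lra.
  - intros; apply is_derive_scal_id.
  - intros t Ht; specialize (Hup t Ht); lra.
Qed.

Lemma gronwall_pos (g dg : R -> R) (a b C : R) : a <= b ->
  (forall t, a <= t <= b -> is_derive g t (dg t)) ->
  (forall t, a <= t <= b -> Rabs (dg t) <= C * g t) ->
  (0 < g a <-> 0 < g b).
Proof.
  intros Hab Hg Hbound.
  assert (Hexp := exp_pos (- (C * (b - a)))).
  split; intros Hpos.
  - assert (g a * exp (- (C * (b - a))) <= g b).
    { apply (gronwall_forward g dg); auto.
      intros t Ht; specialize (Hbound t Ht); apply Rabs_le_between in Hbound; lra. }
    assert (0 < g a * exp (- (C * (b - a)))) by (apply Rmult_lt_0_compat; lra). lra.
  - assert (g b * exp (- (C * (b - a))) <= g a).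
    { apply (gronwall_backward g dg); auto.
      intros t Ht; specialize (Hbound t Ht); apply Rabs_le_between in Hbound; lra. }
    assert (0 < g b * exp (- (C * (b - a)))) by (apply Rmult_lt_0_compat; lra). lra.
Qed.

Definition bounded_away_from_zero (F : (R -> Prop) -> Prop) (h : R -> R) : Prop :=
  exists c, 0 < c /\ F (fun t => c <= h t).

Lemma at_right_iff (a : R) (P : R -> Prop) :
  at_right a P <-> exists d, 0 < d /\ forall t, a < t < a + d -> P t.
Proof.
  unfold at_right, within, locally, ball; simpl; unfold AbsRing_ball, abs, minus, plus, opp; simpl.
  split.
  - intros [d Hd]. exists d; split; [apply cond_pos|].
    intros t Ht. apply Hd; [apply Rabs_def1|]; lra.
  - intros [d [Hd HP]]. exists (mkposreal d Hd); simpl.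
    intros t Ht Hat. apply Rabs_def2 in Ht. apply HP; lra.
Qed.

Lemma at_left_iff (b : R) (P : R -> Prop) :
  at_left b P <-> exists d, 0 < d /\ forall t, b - d < t < b -> P t.
Proof.
  unfold at_left, within, locally, ball; simpl; unfold AbsRing_ball, abs, minus, plus, opp; simpl.
  split.
  - intros [d Hd]. exists d; split; [apply cond_pos|].
    intros t Ht. apply Hd; [apply Rabs_def1|]; lra.
  - intros [d [Hd HP]]. exists (mkposreal d Hd); simpl.
    intros t Ht Htb. apply Rabs_def2 in Ht. apply HP; lra.
Qed.

Lemma bounded_away_at_right_of_lyapunov (A Phi dPhi : R -> R) (rho d c1 c2 C : R) :
  0 < d -> 0 < c1 -> 0 <= C -> 0 < A (rho + d) ->
  (forall r, rho < r <= rho + d ->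
     is_derive Phi r (dPhi r) /\ c1 * A r <= Phi r <= c2 * A r /\ dPhi r <= C * A r) ->
  bounded_away_from_zero (at_right rho) A.
Proof.
  intros Hd Hc1 HC HA0 HPhi.
  set (r0 := rho + d) in *. set (K := C / c1).
  destruct (HPhi r0 ltac:(unfold r0; lra)) as [_ [[Hlo0 Hhi0] _]].
  assert (0 < c1 * A r0) by (apply Rmult_lt_0_compat; lra).
  assert (Hc2 : 0 < c2) by (apply (Rmult_lt_reg_r (A r0)); lra).
  assert (HPhi0 : 0 < Phi r0) by lra.
  assert (Hexp := exp_pos (- (K * d))).
  exists (Phi r0 * exp (- (K * d)) / c2); split.
  { apply Rdiv_lt_0_compat; [apply Rmult_lt_0_compat|]; lra. }
  apply at_right_iff. exists d; split; [exact Hd|]. intros r Hr.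
  assert (Hdecay : Phi r0 * exp (- (K * (r0 - r))) <= Phi r).
  { apply (gronwall_backward Phi dPhi r r0 K);
      [unfold r0; lra | intros t Ht; apply HPhi; unfold r0 in *; lra |].
    intros t Ht. destruct (HPhi t ltac:(unfold r0 in *; lra)) as [_ [[Hlo _] Hup]].
    unfold K. apply (Rle_trans _ (C * A t)); [exact Hup|].
    apply (Rmult_le_reg_r c1); [exact Hc1|].
    replace (C / c1 * Phi t * c1) with (C * Phi t) by (field; lra).
    rewrite Rmult_assoc, (Rmult_comm (A t)). now apply Rmult_le_compat_l. }
  assert (exp (- (K * d)) <= exp (- (K * (r0 - r)))).
  { apply exp_le_compat. unfold r0, K in *.
    assert (0 <= C / c1) by (apply Rdiv_le_0_compat; lra).
    apply Ropp_le_contravar, Rmult_le_compat_l; lra. }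
  destruct (HPhi r ltac:(unfold r0 in *; lra)) as [_ [[_ Hhi] _]].
  apply (Rmult_le_reg_l c2); [exact Hc2|].
  replace (c2 * (Phi r0 * exp (- (K * d)) / c2)) with (Phi r0 * exp (- (K * d))) by (field; lra).
  assert (Phi r0 * exp (- (K * d)) <= Phi r0 * exp (- (K * (r0 - r))))
    by (apply Rmult_le_compat_l; lra).
  lra.
Qed.

Lemma bounded_away_at_infty_of_lyapunov (A Phi dPhi : R -> R) (r0 c1 c2 K : R) :
  0 < r0 -> 0 < c1 -> 0 <= K -> 0 < A r0 ->
  (forall r, r0 <= r ->
     is_derive Phi r (dPhi r) /\ c1 * A r <= Phi r <= c2 * A r /\
     - (K * A r / r ^ 2) <= dPhi r) ->
  bounded_away_from_zero (Rbar_locally p_infty) A.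
Proof.
  intros Hr0 Hc1 HK HA0 HPhi. set (K' := K / c1).
  destruct (HPhi r0 (Rle_refl _)) as [_ [[Hlo0 Hhi0] _]].
  assert (0 < c1 * A r0) by (apply Rmult_lt_0_compat; lra).
  assert (Hc2 : 0 < c2) by (apply (Rmult_lt_reg_r (A r0)); lra).
  assert (Hexp := exp_pos (- (K' / r0))).
  exists (Phi r0 * exp (- (K' / r0)) / c2); split.
  { apply Rdiv_lt_0_compat; [apply Rmult_lt_0_compat|]; lra. }
  exists r0. intros r Hr.
  assert (Hgrowth : Phi r0 * exp (- (K' / r0)) <= Phi r * exp (- (K' / r))).
  { apply (exp_weighted_nondecreasing Phi dPhi (fun t => - (K' / t)) (fun t => K' / t ^ 2));
      [lra | intros t Ht; apply HPhi; lra | |].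
    - intros t Ht. eapply is_derive_replace.
      + apply is_derive_Ropp, is_derive_scal, is_derive_inv; [apply is_derive_id | lra].
      + unfold one; simpl; field; lra.
    - intros t Ht. destruct (HPhi t ltac:(lra)) as [_ [[Hlo _] Hlow]].
      assert (Ht2 : 0 < t ^ 2) by (apply pow_lt; lra).
      assert (K * A t <= K' * Phi t).
      { unfold K'. replace (K / c1 * Phi t) with (K * (Phi t / c1)) by (field; lra).
        apply Rmult_le_compat_l; [lra|].
        apply (Rmult_le_reg_r c1); [lra|].
        replace (Phi t / c1 * c1) with (Phi t) by (field; lra). lra. }
      assert (K * A t / t ^ 2 <= K' / t ^ 2 * Phi t); [|lra].
      replace (K' / t ^ 2 * Phi t) with (K' * Phi t / t ^ 2) by (field; lra).
      apply Rmult_le_compat_r; [apply Rlt_le, Rinv_0_lt_compat|]; lra. }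
  destruct (HPhi r (Rlt_le _ _ Hr)) as [_ [[Hlo Hhi] _]].
  assert (exp (- (K' / r)) <= 1).
  { rewrite <- exp_0. apply exp_le_compat.
    assert (0 <= K' / r) by (apply Rdiv_le_0_compat; [apply Rdiv_le_0_compat|]; lra). lra. }
  assert (0 <= Phi r).
  { destruct (Rle_or_lt (Phi r) 0); [|lra].
    assert (Phi r * exp (- (K' / r)) <= 0) by (apply Rmult_le_0_r; [|apply Rlt_le, exp_pos]; lra).
    assert (0 < Phi r0 * exp (- (K' / r0))) by (apply Rmult_lt_0_compat; lra). lra. }
  assert (Phi r * exp (- (K' / r)) <= Phi r * 1) by (apply Rmult_le_compat_l; lra).
  apply (Rmult_le_reg_l c2); [exact Hc2|].
  replace (c2 * (Phi r0 * exp (- (K' / r0)) / c2)) with (Phi r0 * exp (- (K' / r0)))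
    by (field; lra).
  lra.
Qed.

(** * Divergent improper integrals *)

Lemma is_RInt_ge_const (h : R -> R) (t1 t2 y K : R) : t1 <= t2 -> is_RInt h t1 t2 y ->
  (forall t, t1 < t < t2 -> K <= h t) -> K * (t2 - t1) <= y.
Proof.
  intros H12 Hy HK.
  assert (Hle := is_RInt_le (fun _ => K) h t1 t2 _ _ H12 (is_RInt_const t1 t2 K) Hy HK).
  change (scal (t2 - t1) K) with ((t2 - t1) * K) in Hle. lra.
Qed.

Lemma ex_RInt_gen_cauchy_l (h : R -> R) (Fa Fb : (R -> Prop) -> Prop) {PFb : ProperFilter Fb} :
  ex_RInt_gen h Fa Fb -> forall eps, 0 < eps ->
  exists Q, Fa Q /\ forall t1 t2, Q t1 -> Q t2 ->
    exists y, is_RInt h t1 t2 y /\ Rabs y < eps.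
Proof.
  intros [l Hl] eps Heps.
  assert (Hball : locally l (fun y : R => Rabs (y - l) < eps / 2)).
  { exists (mkposreal (eps / 2) ltac:(lra)). intros y Hy. exact Hy. }
  destruct (Hl _ Hball) as [Q S HQ HS HQS].
  exists Q; split; [exact HQ|]. intros t1 t2 Ht1 Ht2.
  destruct (filter_ex S HS) as [s Hs].
  destruct (HQS t1 s Ht1 Hs) as [y1 [Hy1 E1]]. destruct (HQS t2 s Ht2 Hs) as [y2 [Hy2 E2]].
  exists (y1 - y2); split.
  - replace (y1 - y2) with (plus y1 (opp y2)) by reflexivity.
    apply (is_RInt_Chasles h t1 s t2); [exact Hy1 | now apply is_RInt_swap].
  - apply Rabs_def2 in E1. apply Rabs_def2 in E2. apply Rabs_def1; lra.
Qed.

Lemma ex_RInt_gen_cauchy_r (h : R -> R) (Fa Fb : (R -> Prop) -> Prop)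
  {PFa : ProperFilter Fa} {FFb : Filter Fb} :
  ex_RInt_gen h Fa Fb -> forall eps, 0 < eps ->
  exists Q, Fb Q /\ forall t1 t2, Q t1 -> Q t2 ->
    exists y, is_RInt h t1 t2 y /\ Rabs y < eps.
Proof.
  intros [l Hl]. apply (ex_RInt_gen_cauchy_l h Fb Fa).
  exists (opp l). now apply is_RInt_gen_swap.
Qed.

Lemma not_ex_RInt_gen_at_right (h : R -> R) (a c : R) (Fb : (R -> Prop) -> Prop)
  {PFb : ProperFilter Fb} :
  0 < c -> at_right a (fun t => c / (t - a) <= h t) -> ~ ex_RInt_gen h (at_right a) Fb.
Proof.
  intros Hc Hlow Hint.
  destruct (ex_RInt_gen_cauchy_l h _ _ Hint (c / 2)) as [Q [HQ HQint]]; [lra|].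
  destruct (proj1 (at_right_iff _ _) (filter_and _ _ HQ Hlow)) as [d [Hd Hnear]].
  destruct (HQint (a + d / 4) (a + d / 2)) as [y [Hy Hsmall]]; try (apply Hnear; lra).
  assert (Hlow_y : c / (d / 2) * (a + d / 2 - (a + d / 4)) <= y).
  { apply (is_RInt_ge_const h); [lra | exact Hy |]. intros t Ht.
    apply (Rle_trans _ (c / (t - a))); [|apply Hnear; lra].
    apply Rmult_le_compat_l, Rinv_le_contravar; lra. }
  replace (c / (d / 2) * (a + d / 2 - (a + d / 4))) with (c / 2) in Hlow_y by (field; lra).
  apply Rabs_def2 in Hsmall. lra.
Qed.

Lemma not_ex_RInt_gen_at_left (h : R -> R) (b c : R) (Fa : (R -> Prop) -> Prop)
  {PFa : ProperFilter Fa} :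
  0 < c -> at_left b (fun t => c / (b - t) <= h t) -> ~ ex_RInt_gen h Fa (at_left b).
Proof.
  intros Hc Hlow Hint.
  destruct (ex_RInt_gen_cauchy_r h _ _ Hint (c / 2)) as [Q [HQ HQint]]; [lra|].
  destruct (proj1 (at_left_iff _ _) (filter_and _ _ HQ Hlow)) as [d [Hd Hnear]].
  destruct (HQint (b - d / 2) (b - d / 4)) as [y [Hy Hsmall]]; try (apply Hnear; lra).
  assert (Hlow_y : c / (d / 2) * (b - d / 4 - (b - d / 2)) <= y).
  { apply (is_RInt_ge_const h); [lra | exact Hy |]. intros t Ht.
    apply (Rle_trans _ (c / (b - t))); [|apply Hnear; lra].
    apply Rmult_le_compat_l, Rinv_le_contravar; lra. }
  replace (c / (d / 2) * (b - d / 4 - (b - d / 2))) with (c / 2) in Hlow_y by (field; lra).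
  apply Rabs_def2 in Hsmall. lra.
Qed.

Lemma not_ex_RInt_gen_p_infty (h : R -> R) (Fa : (R -> Prop) -> Prop) {PFa : ProperFilter Fa} :
  bounded_away_from_zero (Rbar_locally p_infty) h -> ~ ex_RInt_gen h Fa (Rbar_locally p_infty).
Proof.
  intros [c [Hc Hlow]] Hint.
  destruct (ex_RInt_gen_cauchy_r h _ _ Hint c Hc) as [Q [HQ HQint]].
  destruct (filter_and _ _ HQ Hlow) as [M HM].
  destruct (HQint (M + 1) (M + 2)) as [y [Hy Hsmall]]; try (apply HM; lra).
  assert (c * (M + 2 - (M + 1)) <= y).
  { apply (is_RInt_ge_const h); [lra | exact Hy |]. intros t Ht. apply HM; lra. }
  apply Rabs_def2 in Hsmall. lra.
Qed.

(** * Derivatives of complex-valued functions *)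

Lemma is_derive_C_Re (u : R -> C) (x : R) (du : C) :
  is_derive u x du -> is_derive (fun t => Re (u t)) x (Re du).
Proof.
  intros H. apply (filterdiff_comp' u fst x _ fst H), filterdiff_linear.
  apply (is_linear_fst (U := R_NormedModule) (V := R_NormedModule)).
Qed.

Lemma is_derive_C_Im (u : R -> C) (x : R) (du : C) :
  is_derive u x du -> is_derive (fun t => Im (u t)) x (Im du).
Proof.
  intros H. apply (filterdiff_comp' u snd x _ snd H), filterdiff_linear.
  apply (is_linear_snd (U := R_NormedModule) (V := R_NormedModule)).
Qed.

Lemma is_derive_mul_conj (u w : R -> C) (x : R) (du dw : C) :
  is_derive u x du -> is_derive w x dw ->
  is_derive (fun t => Re (u t * Cconj (w t))) x (Re (du * Cconj (w x) + u x * Cconj dw)) /\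
  is_derive (fun t => Im (u t * Cconj (w t))) x (Im (du * Cconj (w x) + u x * Cconj dw)).
Proof.
  intros Hu Hw.
  assert (Hu1 := is_derive_C_Re _ _ _ Hu). assert (Hu2 := is_derive_C_Im _ _ _ Hu).
  assert (Hw1 := is_derive_C_Re _ _ _ Hw). assert (Hw2 := is_derive_C_Im _ _ _ Hw).
  split.
  - apply (is_derive_ext (fun t => Re (u t) * Re (w t) + Im (u t) * Im (w t))).
    { intros t; unfold Re, Im; simpl; ring. }
    eapply is_derive_replace; [apply is_derive_Rplus; apply is_derive_Rmult; eassumption|].
    unfold Re, Im; simpl; ring.
  - apply (is_derive_ext (fun t => Im (u t) * Re (w t) + - (Re (u t) * Im (w t)))).
    { intros t; unfold Re, Im; simpl; ring. }
    eapply is_derive_replace;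
      [apply is_derive_Rplus; [|apply is_derive_Ropp]; apply is_derive_Rmult; eassumption|].
    unfold Re, Im; simpl; ring.
Qed.

Lemma Cmod2_Re_mul_conj (z : C) : Cmod z ^ 2 = Re (z * Cconj z).
Proof. rewrite Cmod2_alt. unfold Re, Im; simpl; ring. Qed.

Lemma is_derive_Cmod2 (u : R -> C) (x : R) (du : C) :
  is_derive u x du ->
  is_derive (fun t => Cmod (u t) ^ 2) x (Re (du * Cconj (u x) + u x * Cconj du)).
Proof.
  intros Hu. apply (is_derive_ext (fun t => Re (u t * Cconj (u t)))).
  { intros t; symmetry; apply Cmod2_Re_mul_conj. }
  exact (proj1 (is_derive_mul_conj u u x du du Hu Hu)).
Qed.

(** * The angular equation *)

Lemma half_integer_abs_ge (k : R) : half_integer k -> 1 <= Rabs (2 * k).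
Proof.
  intros [z ->]. destruct (Z_lt_le_dec z 0) as [Hz|Hz].
  - assert (IZR z <= -1) by (apply IZR_le; lia).
    rewrite Rabs_left; lra.
  - assert (0 <= IZR z) by now apply IZR_le.
    rewrite Rabs_right; lra.
Qed.

Section SinODE.
Variables (P : R -> R) (kappa th1 : R).
Hypothesis P_ode : forall t, 0 < t < PI -> is_derive P t (kappa * P t / sin t).
Hypothesis P_ge0 : forall t, 0 < t < PI -> 0 <= P t.
Hypothesis th1_in : 0 < th1 < PI.

(* [P] behaves like [tan (t/2) ^ kappa]; [sin t <= min t (PI - t)] gives the bounds below. *)
Lemma sin_ode_blowup_at_pi : 1 <= kappa ->
  forall t, th1 < t < PI -> (PI - th1) * P th1 / (PI - t) <= P t.
Proof.
  intros Hk t Ht.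
  assert (Hmono : (PI - th1) * P th1 <= (PI - t) * P t).
  { apply (nondecreasing_of_derive (fun s => (PI - s) * P s)
             (fun s => P s * (kappa * (PI - s) / sin s - 1))); [lra| |].
    - intros s Hs. assert (0 < sin s) by (apply sin_gt_0; lra).
      eapply is_derive_replace.
      + apply is_derive_Rmult; [|apply P_ode; lra].
        apply (is_derive_Rplus (fun _ => PI) (fun s => - s));
          [apply is_derive_const | apply is_derive_Ropp, is_derive_id].
      + unfold zero, one; simpl; field; lra.
    - intros s Hs. apply Rmult_le_pos; [apply P_ge0; lra|].
      assert (Hsin : sin s < PI - s) by (rewrite <- sin_PI_x; apply sin_lt_x; lra).
      assert (0 < sin s) by (apply sin_gt_0; lra).
      apply (Rmult_le_reg_r (sin s)); [lra|].
      replace ((kappa * (PI - s) / sin s - 1) * sin s) with (kappa * (PI - s) - sin s)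
        by (field; lra).
      nra. }
  apply (Rmult_le_reg_r (PI - t)); [lra|].
  replace ((PI - th1) * P th1 / (PI - t) * (PI - t)) with ((PI - th1) * P th1) by (field; lra).
  lra.
Qed.

Lemma sin_ode_blowup_at_0 : kappa <= -1 ->
  forall t, 0 < t < th1 -> th1 * P th1 / t <= P t.
Proof.
  intros Hk t Ht.
  assert (Hmono : - (t * P t) <= - (th1 * P th1)).
  { apply (nondecreasing_of_derive (fun s => - (s * P s))
             (fun s => - (P s * (1 + kappa * s / sin s)))); [lra| |].
    - intros s Hs. assert (0 < sin s) by (apply sin_gt_0; lra).
      eapply is_derive_replace.
      + apply is_derive_Ropp, is_derive_Rmult; [apply is_derive_id | apply P_ode; lra].
      + unfold one; simpl; field; lra.
    - intros s Hs. apply Ropp_0_ge_le_contravar, Rle_ge, Rmult_le_0_l; [apply P_ge0; lra|].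
      assert (Hsin : sin s < s) by (apply sin_lt_x; lra).
      assert (0 < sin s) by (apply sin_gt_0; lra).
      apply (Rmult_le_reg_r (sin s)); [lra|].
      replace ((1 + kappa * s / sin s) * sin s) with (sin s + kappa * s) by (field; lra).
      nra. }
  apply (Rmult_le_reg_r t); [lra|].
  replace (th1 * P th1 / t * t) with (th1 * P th1) by (field; lra).
  lra.
Qed.

Lemma sin_ode_not_integrable (h : R -> R) : 1 <= Rabs kappa -> 0 < P th1 ->
  (forall t, 0 < t < PI -> P t <= h t) -> ~ ex_RInt_gen h (at_right 0) (at_left PI).
Proof.
  intros Hk HP1 Hh.
  assert (0 < th1 * P th1) by (apply Rmult_lt_0_compat; lra).
  assert (0 < (PI - th1) * P th1) by (apply Rmult_lt_0_compat; lra).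
  destruct (Rle_or_lt 0 kappa) as [Hpos|Hneg].
  - rewrite Rabs_right in Hk by lra.
    refine (not_ex_RInt_gen_at_left h PI ((PI - th1) * P th1) (at_right 0) _ _); [lra|].
    apply at_left_iff. exists (PI - th1); split; [lra|]. intros t Ht.
    apply (Rle_trans _ (P t)); [apply sin_ode_blowup_at_pi | apply Hh]; lra.
  - rewrite Rabs_left in Hk by lra.
    refine (not_ex_RInt_gen_at_right h 0 (th1 * P th1) (at_left PI) _ _); [lra|].
    apply at_right_iff. exists th1; split; [lra|]. intros t Ht.
    rewrite Rminus_0_r.
    apply (Rle_trans _ (P t)); [apply sin_ode_blowup_at_0 | apply Hh]; lra.
Qed.

End SinODE.

Lemma is_derive_Cmod2_sin (u : R -> C) (c th : R) : sin th <> 0 ->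
  is_derive u th (RtoC (c / sin th - cos th / sin th / 2) * u th)%C ->
  is_derive (fun t => Cmod (u t) ^ 2 * sin t) th (2 * c * (Cmod (u th) ^ 2 * sin th) / sin th).
Proof.
  intros Hs Hu. eapply is_derive_replace.
  - exact (is_derive_Rmult _ sin th _ _ (is_derive_Cmod2 u th _ Hu) (is_derive_sin th)).
  - cbv beta. rewrite !Cmod2_alt. destruct (u th) as [p q].
    unfold Re, Im, RtoC; simpl. field; exact Hs.
Qed.

Lemma angular_equations_decouple (m k omega th : R) (g1 g2 d1 d2 : C) :
  (d1 + RtoC (cos th / sin th / 2) * g1 - RtoC (Wpot 0 omega k th) * g1
     + RtoC (- (0 * m * cos th) + 0) * g2 = 0)%C ->
  (RtoC (0 * m * cos th + 0) * g1 - d2 - RtoC (cos th / sin th / 2) * g2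
     - RtoC (Wpot 0 omega k th) * g2 = 0)%C ->
  d1 = (RtoC (k / sin th - cos th / sin th / 2) * g1)%C /\
  d2 = (RtoC (- k / sin th - cos th / sin th / 2) * g2)%C.
Proof.
  intros E1 E2.
  destruct g1 as [p1 q1], g2 as [p2 q2], d1 as [a1 b1], d2 as [a2 b2].
  unfold Wpot, Cminus, Cplus, Cmult, Copp, RtoC in *; simpl in *.
  injection E1 as E1 E1'. injection E2 as E2 E2'.
  unfold Rdiv in *. split; f_equal; lra.
Qed.

Lemma normsq2_pos (v : C * C) : v <> (RtoC 0, RtoC 0) -> 0 < normsq2 v.
Proof.
  intros Hv. unfold normsq2. destruct v as [v1 v2].
  assert (Hv1 := Cmod_ge_0 v1). assert (Hv2 := Cmod_ge_0 v2).
  assert (Hsq1 := pow2_ge_0 (Cmod v1)). assert (Hsq2 := pow2_ge_0 (Cmod v2)). simpl.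
  destruct (Req_dec (Cmod v1) 0) as [E1|E1]; [destruct (Req_dec (Cmod v2) 0) as [E2|E2]|].
  - apply Cmod_eq_0 in E1, E2. now subst.
  - assert (0 < Cmod v2 ^ 2) by (apply pow_lt; lra). lra.
  - assert (0 < Cmod v1 ^ 2) by (apply pow_lt; lra). lra.
Qed.

Lemma nonrotating_angular_zero_not_L2 (m k omega : R) (g : R -> C * C) :
  half_integer k -> angular_solution 0 m k omega 0 g ->
  (exists th, 0 < th < PI /\ g th <> (RtoC 0, RtoC 0)) -> ~ angular_L2 g.
Proof.
  intros Hk Hsol [th1 [Hth1 Hne]].
  set (P1 := fun t => Cmod (fst (g t)) ^ 2 * sin t).
  set (P2 := fun t => Cmod (snd (g t)) ^ 2 * sin t).
  assert (Hsin : forall t, 0 < t < PI -> 0 < sin t) by (intros; apply sin_gt_0; lra).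
  assert (Hode : forall t, 0 < t < PI ->
            is_derive P1 t (2 * k * P1 t / sin t) /\ is_derive P2 t (2 * - k * P2 t / sin t)).
  { intros t Ht. destruct (Hsol t Ht) as [d1 [d2 [D1 [D2 [E1 E2]]]]].
    destruct (angular_equations_decouple m k omega t _ _ _ _ E1 E2) as [-> ->].
    assert (sin t <> 0) by (specialize (Hsin t Ht); lra).
    split; apply is_derive_Cmod2_sin; auto. }
  assert (Hpos : forall t, 0 < t < PI -> 0 <= P1 t /\ 0 <= P2 t).
  { intros t Ht. specialize (Hsin t Ht). unfold P1, P2.
    split; apply Rmult_le_pos; try apply pow2_ge_0; lra. }
  assert (Hsum : forall t, normsq2 (g t) * sin t = P1 t + P2 t).
  { intros t. unfold normsq2, P1, P2. ring. }
  assert (Hk1 : 1 <= Rabs (2 * k)) by now apply half_integer_abs_ge.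
  assert (Hth1_pos : 0 < P1 th1 + P2 th1).
  { rewrite <- Hsum. apply Rmult_lt_0_compat; [now apply normsq2_pos | now apply Hsin]. }
  destruct (Hpos th1 Hth1) as [HP1 HP2].
  unfold angular_L2. destruct (Rlt_or_le 0 (P1 th1)) as [Hp|Hz].
  - refine (sin_ode_not_integrable P1 (2 * k) th1 _ _ Hth1
              (fun t => normsq2 (g t) * sin t) Hk1 Hp _).
    + intros t Ht; apply Hode, Ht.
    + intros t Ht; apply Hpos, Ht.
    + intros t Ht. rewrite Hsum. destruct (Hpos t Ht). lra.
  - refine (sin_ode_not_integrable P2 (2 * - k) th1 _ _ Hth1
              (fun t => normsq2 (g t) * sin t) _ _ _).
    + intros t Ht; apply Hode, Ht.
    + intros t Ht; apply Hpos, Ht.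
    + rewrite <- Ropp_mult_distr_r, Rabs_Ropp. exact Hk1.
    + lra.
    + intros t Ht. rewrite Hsum. destruct (Hpos t Ht). lra.
Qed.

(** * The radial equation *)

Definition mixed_product (v : C * C) : C := (fst v * Cconj (snd v))%C.

Lemma mixed_product_bound (v : C * C) :
  Re (mixed_product v) ^ 2 + Im (mixed_product v) ^ 2 <= normsq2 v ^ 2 / 4.
Proof.
  rewrite <- Cmod2_alt. unfold mixed_product, normsq2. rewrite Cmod_mult, Cmod_conj.
  set (a := Cmod (fst v)). set (b := Cmod (snd v)).
  assert (((a ^ 2 + b ^ 2) ^ 2 / 4 - (a * b) ^ 2) = (a ^ 2 - b ^ 2) ^ 2 / 4) by field.
  assert (0 <= (a ^ 2 - b ^ 2) ^ 2) by apply pow2_ge_0. lra.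
Qed.

Lemma radial_equations_solved (x s mr l : R) (f1 f2 d1 d2 : C) : x <> 0 ->
  (RtoC x * d1 + Ci * RtoC s * f1 + (Ci * RtoC mr - RtoC l) * f2 = 0)%C ->
  ((- (Ci * RtoC mr) - RtoC l) * f1 + RtoC x * d2 - Ci * RtoC s * f2 = 0)%C ->
  d1 = (RtoC (/ x) * (- (Ci * RtoC s) * f1 - (Ci * RtoC mr - RtoC l) * f2))%C /\
  d2 = (RtoC (/ x) * ((Ci * RtoC mr + RtoC l) * f1 + Ci * RtoC s * f2))%C.
Proof.
  intros Hx E1 E2.
  destruct f1 as [p1 q1], f2 as [p2 q2], d1 as [a1 b1], d2 as [a2 b2].
  unfold Cminus, Cplus, Cmult, Copp, RtoC, Ci in *; simpl in *.
  injection E1 as E1 E1'. injection E2 as E2 E2'.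
  split; f_equal; field_simplify_eq; auto; lra.
Qed.

Lemma radial_solution_quadratic_ode (rho a Q m e k omega lambda : R) (f : R -> C * C) :
  radial_solution rho a Q m e k omega lambda f -> forall r, rho < r ->
  let s := Vpot a Q omega k e r / (r - rho) in
  is_derive (fun t => normsq2 (f t)) r
    ((4 * lambda * Re (mixed_product (f r)) - 4 * m * r * Im (mixed_product (f r))) / (r - rho)) /\
  is_derive (fun t => Re (mixed_product (f t))) r
    ((lambda * normsq2 (f r) + 2 * s * Im (mixed_product (f r))) / (r - rho)) /\
  is_derive (fun t => Im (mixed_product (f t))) r
    ((- 2 * s * Re (mixed_product (f r)) - m * r * normsq2 (f r)) / (r - rho)).
Proof.
  intros Hsol r Hr s.
  destruct (Hsol r Hr) as [d1 [d2 [D1 [D2 [E1 E2]]]]]. cbv zeta in E1, E2. fold s in E1, E2.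
  assert (Hx : r - rho <> 0) by lra.
  destruct (radial_equations_solved _ _ _ _ _ _ _ _ Hx E1 E2) as [Ed1 Ed2].
  assert (DA := is_derive_Rplus _ _ _ _ _ (is_derive_Cmod2 _ _ _ D1) (is_derive_Cmod2 _ _ _ D2)).
  destruct (is_derive_mul_conj _ _ _ _ _ D1 D2) as [DB1 DB2].
  split; [|split]; (eapply is_derive_replace; [eassumption|]);
    rewrite Ed1, Ed2; unfold mixed_product, normsq2; rewrite ?Cmod2_alt;
    destruct (f r) as [[p1 q1] [p2 q2]];
    unfold Re, Im, Cconj, Cplus, Cmult, Copp, Cminus, RtoC, Ci; simpl;
    field; exact Hx.
Qed.

Lemma Rabs_lincomb_le (a b1 b2 x y z : R) :
  0 <= a -> Rabs b1 <= a / 2 -> Rabs b2 <= a / 2 ->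
  Rabs (x * a + y * b1 + z * b2) <= (Rabs x + (Rabs y + Rabs z) / 2) * a.
Proof.
  intros Ha H1 H2.
  assert (Rabs (x * a) = Rabs x * a) by now rewrite Rabs_mult, (Rabs_pos_eq a).
  assert (Rabs (y * b1) <= Rabs y * (a / 2))
    by (rewrite Rabs_mult; apply Rmult_le_compat_l; [apply Rabs_pos | exact H1]).
  assert (Rabs (z * b2) <= Rabs z * (a / 2))
    by (rewrite Rabs_mult; apply Rmult_le_compat_l; [apply Rabs_pos | exact H2]).
  assert (Rabs (x * a + y * b1 + z * b2) <= Rabs (x * a + y * b1) + Rabs (z * b2))
    by apply Rabs_triang.
  assert (Rabs (x * a + y * b1) <= Rabs (x * a) + Rabs (y * b1)) by apply Rabs_triang.
  lra.
Qed.

Lemma derive_of_vanishing (g : R -> R) (rho r l : R) : rho < r ->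
  (forall t, rho < t -> g t = 0) -> is_derive g r l -> l = 0.
Proof.
  intros Hr Hg Hd.
  assert (Hloc : locally r (fun t => g t = (fun _ : R => 0) t)).
  { exists (mkposreal (r - rho) ltac:(lra)). intros t Ht.
    unfold ball in Ht; simpl in Ht; unfold AbsRing_ball, abs, minus, plus, opp in Ht; simpl in Ht.
    apply Rabs_def2 in Ht. apply Hg. lra. }
  apply is_derive_unique in Hd. rewrite <- Hd.
  rewrite (Derive_ext_loc _ _ _ Hloc). apply Derive_const.
Qed.

Section RadialCore.
Variables (rho m lambda omega E : R) (A B1 B2 : R -> R).
Hypothesis rho_pos : 0 < rho.
Hypothesis m_pos : 0 < m.
Hypothesis lambda_neq0 : lambda <> 0.
Hypothesis A_ode : forall r, rho < r ->
  is_derive A r ((4 * lambda * B1 r - 4 * m * r * B2 r) / (r - rho)).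
Hypothesis B1_ode : forall r, rho < r ->
  is_derive B1 r ((lambda * A r + 2 * ((omega * r ^ 2 + E * r) / (r - rho)) * B2 r) / (r - rho)).
Hypothesis B2_ode : forall r, rho < r ->
  is_derive B2 r ((- 2 * ((omega * r ^ 2 + E * r) / (r - rho)) * B1 r - m * r * A r) / (r - rho)).
Hypothesis A_ge0 : forall r, rho < r -> 0 <= A r.
Hypothesis B_bound : forall r, rho < r -> B1 r ^ 2 + B2 r ^ 2 <= A r ^ 2 / 4.
Hypothesis A_nontrivial : exists r1, rho < r1 /\ 0 < A r1.
Hypothesis A_not_away_at_rho : ~ bounded_away_from_zero (at_right rho) A.
Hypothesis A_not_away_at_infty : ~ bounded_away_from_zero (Rbar_locally p_infty) A.

Lemma cross_terms_abs_le r : rho < r -> Rabs (B1 r) <= A r / 2 /\ Rabs (B2 r) <= A r / 2.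
Proof.
  intros Hr. specialize (B_bound r Hr). specialize (A_ge0 r Hr).
  split; apply Rabs_le; split; nra.
Qed.

Lemma lincomb_abs_le r (x y z : R) : rho < r ->
  Rabs (x * A r + y * B1 r + z * B2 r) <= (Rabs x + (Rabs y + Rabs z) / 2) * A r.
Proof. intros Hr. destruct (cross_terms_abs_le r Hr). apply Rabs_lincomb_le; auto. Qed.

Lemma zero_of_monotone_dominated (g dg : R -> R) (C : R) : 0 < C ->
  (forall r, rho < r -> is_derive g r (dg r)) -> (forall r, rho < r -> 0 <= dg r) ->
  (forall r, rho < r -> Rabs (g r) <= C * A r) -> forall r, rho < r -> g r = 0.
Proof.
  intros HC Hg Hdg Hdom r Hr.
  assert (Hmono : forall a b, rho < a <= b -> g a <= g b).
  { intros a b Hab. apply (nondecreasing_of_derive g dg); [lra | |];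
      intros t Ht; [apply Hg | apply Hdg]; lra. }
  destruct (Rtotal_order (g r) 0) as [Hneg|[Hz|Hpos]]; [exfalso | exact Hz | exfalso].
  - apply A_not_away_at_rho. exists (- g r / C); split; [apply Rdiv_lt_0_compat; lra|].
    apply at_right_iff. exists (r - rho); split; [lra|]. intros t Ht.
    assert (g t <= g r) by (apply Hmono; lra).
    assert (Hgt : Rabs (g t) <= C * A t) by (apply Hdom; lra).
    apply Rabs_le_between in Hgt.
    apply (Rmult_le_reg_l C); [exact HC|].
    replace (C * (- g r / C)) with (- g r) by (field; lra). lra.
  - apply A_not_away_at_infty. exists (g r / C); split; [apply Rdiv_lt_0_compat; lra|].
    exists r. intros t Ht.
    assert (g r <= g t) by (apply Hmono; lra).
    assert (Hgt : Rabs (g t) <= C * A t) by (apply Hdom; lra).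
    apply Rabs_le_between in Hgt.
    apply (Rmult_le_reg_l C); [exact HC|].
    replace (C * (g r / C)) with (g r) by (field; lra). lra.
Qed.

Lemma density_deriv_bound r : rho < r ->
  Rabs (4 * lambda * B1 r - 4 * m * r * B2 r) <= (2 * Rabs lambda + 2 * m * r) * A r.
Proof.
  intros Hr.
  replace (4 * lambda * B1 r - 4 * m * r * B2 r)
    with (0 * A r + (4 * lambda) * B1 r + - (4 * m * r) * B2 r) by ring.
  eapply Rle_trans; [now apply lincomb_abs_le|]. apply Rmult_le_compat_r; [now apply A_ge0|].
  rewrite Rabs_R0, Rabs_Ropp, !Rabs_mult, (Rabs_pos_eq 4), (Rabs_pos_eq m), (Rabs_pos_eq r); lra.
Qed.

Lemma density_growth_rate (a b t : R) : rho < a -> a <= t <= b ->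
  Rabs ((4 * lambda * B1 t - 4 * m * t * B2 t) / (t - rho))
    <= (2 * Rabs lambda + 2 * m * b) / (a - rho) * A t.
Proof.
  intros Ha Ht.
  assert (0 <= A t) by (apply A_ge0; lra).
  assert (0 <= Rabs lambda) by apply Rabs_pos.
  rewrite Rabs_div, (Rabs_pos_eq (t - rho)) by lra.
  apply (Rle_trans _ ((2 * Rabs lambda + 2 * m * t) * A t / (t - rho))).
  { apply Rmult_le_compat_r; [apply Rlt_le, Rinv_0_lt_compat; lra|].
    apply density_deriv_bound; lra. }
  unfold Rdiv. rewrite Rmult_assoc, (Rmult_comm (A t)), <- Rmult_assoc.
  apply Rmult_le_compat_r; [lra|].
  apply Rmult_le_compat; [nra | apply Rlt_le, Rinv_0_lt_compat; lra | nra |].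
  apply Rinv_le_contravar; lra.
Qed.

Lemma density_pos r : rho < r -> 0 < A r.
Proof.
  intros Hr. destruct A_nontrivial as [r1 [Hr1 HA1]].
  set (a := Rmin r r1). set (b := Rmax r r1).
  assert (Ha : rho < a) by (unfold a; apply Rmin_glb_lt; lra).
  assert (Hab : a <= b) by (unfold a, b; apply (Rle_trans _ r); [apply Rmin_l | apply Rmax_l]).
  assert (Hiff : 0 < A a <-> 0 < A b).
  { apply (gronwall_pos A (fun t => (4 * lambda * B1 t - 4 * m * t * B2 t) / (t - rho)) a b
             ((2 * Rabs lambda + 2 * m * b) / (a - rho)) Hab).
    - intros t Ht. apply A_ode. lra.
    - intros t Ht. now apply density_growth_rate. }
  unfold a, b in *. destruct (Rle_or_lt r r1) as [Hle|Hlt].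
  - rewrite Rmin_left, Rmax_right in Hiff by lra. now apply Hiff.
  - rewrite Rmin_right, Rmax_left in Hiff by lra. now apply Hiff.
Qed.

(* The [1 / (r - rho)] singularities of [A'], [B1'], [B2'] cancel in its derivative. *)
Definition horizon_energy (r : R) : R :=
  (omega * r ^ 2 + E * r) * A r + (r - rho) * (2 * lambda * B2 r + 2 * m * r * B1 r).

Definition horizon_energy_rate (r : R) : R :=
  (2 * omega * r + E) * A r + 2 * m * (2 * r - rho) * B1 r + 2 * lambda * B2 r.

Lemma horizon_energy_derive r : rho < r -> is_derive horizon_energy r (horizon_energy_rate r).
Proof.
  intros Hr. eapply is_derive_replace.
  - apply is_derive_Rplus; apply is_derive_Rmult.
    + apply is_derive_Rplus;
        [apply is_derive_scal, is_derive_pow, is_derive_id | apply is_derive_scal_id].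
    + now apply A_ode.
    + apply (is_derive_Rplus (fun t => t) (fun _ => - rho));
        [apply is_derive_id | apply is_derive_const].
    + apply is_derive_Rplus; [apply is_derive_scal; now apply B2_ode|].
      apply is_derive_Rmult; [apply is_derive_scal_id | now apply B1_ode].
  - unfold horizon_energy_rate, one, zero; simpl. field. lra.
Qed.

Lemma horizon_energy_close : exists L, 0 < L /\ forall r, rho < r <= rho + 1 ->
  Rabs (horizon_energy r - (omega * rho ^ 2 + E * rho) * A r) <= (r - rho) * L * A r.
Proof.
  exists (Rabs omega * (2 * rho + 1) + Rabs E + m * (rho + 1) + Rabs lambda). split.
  { assert (0 <= Rabs omega * (2 * rho + 1)) by (apply Rmult_le_pos; [apply Rabs_pos | lra]).
    assert (0 < m * (rho + 1)) by (apply Rmult_lt_0_compat; lra).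
    pose proof (Rabs_pos E). pose proof (Rabs_pos lambda). lra. }
  intros r Hr.
  replace (horizon_energy r - (omega * rho ^ 2 + E * rho) * A r)
    with ((r - rho) * ((omega * (r + rho) + E) * A r + (2 * m * r) * B1 r + (2 * lambda) * B2 r))
    by (unfold horizon_energy; ring).
  rewrite Rabs_mult, (Rabs_pos_eq (r - rho)) by lra. rewrite (Rmult_assoc (r - rho)).
  apply Rmult_le_compat_l; [lra|].
  eapply Rle_trans; [apply lincomb_abs_le; lra|]. apply Rmult_le_compat_r; [apply A_ge0; lra|].
  assert (Rabs (omega * (r + rho) + E) <= Rabs omega * (2 * rho + 1) + Rabs E).
  { eapply Rle_trans; [apply Rabs_triang|]. rewrite Rabs_mult, (Rabs_pos_eq (r + rho)) by lra.
    apply Rplus_le_compat_r, Rmult_le_compat_l; [apply Rabs_pos | lra]. }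
  rewrite !Rabs_mult, (Rabs_pos_eq 2), (Rabs_pos_eq m), (Rabs_pos_eq r) by lra.
  assert (m * r <= m * (rho + 1)) by (apply Rmult_le_compat_l; lra). lra.
Qed.

Lemma horizon_energy_rate_le : exists Z, 0 <= Z /\ forall r, rho < r <= rho + 1 ->
  Rabs (horizon_energy_rate r) <= Z * A r.
Proof.
  exists (2 * Rabs omega * (rho + 1) + Rabs E + m * (rho + 2) + Rabs lambda). split.
  { assert (0 <= 2 * Rabs omega * (rho + 1)) by (pose proof (Rabs_pos omega); nra).
    assert (0 <= m * (rho + 2)) by (apply Rmult_le_pos; lra).
    pose proof (Rabs_pos E). pose proof (Rabs_pos lambda). lra. }
  intros r Hr. eapply Rle_trans; [apply lincomb_abs_le; lra|].
  apply Rmult_le_compat_r; [apply A_ge0; lra|].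
  assert (Rabs (2 * omega * r + E) <= 2 * Rabs omega * (rho + 1) + Rabs E).
  { eapply Rle_trans; [apply Rabs_triang|].
    rewrite !Rabs_mult, (Rabs_pos_eq 2), (Rabs_pos_eq r) by lra.
    apply Rplus_le_compat_r, Rmult_le_compat_l; [pose proof (Rabs_pos omega) |]; lra. }
  rewrite !Rabs_mult, (Rabs_pos_eq 2), (Rabs_pos_eq m), (Rabs_pos_eq (2 * r - rho)) by lra.
  assert (m * (2 * r - rho) <= m * (rho + 2)) by (apply Rmult_le_compat_l; lra). lra.
Qed.

Lemma horizon_potential_vanishes : omega * rho ^ 2 + E * rho = 0.
Proof.
  destruct (Req_dec (omega * rho ^ 2 + E * rho) 0) as [|HV0]; [assumption | exfalso].
  set (V0 := omega * rho ^ 2 + E * rho) in *.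
  destruct horizon_energy_close as [L [HL Hclose]].
  destruct horizon_energy_rate_le as [Z [HZ Hrate]].
  assert (HaV : 0 < Rabs V0) by now apply Rabs_pos_lt.
  assert (HV2 : V0 ^ 2 = Rabs V0 * Rabs V0) by (rewrite <- pow2_abs; ring).
  set (d := Rmin 1 (Rabs V0 / (2 * L))).
  assert (Hd : 0 < d) by (apply Rmin_glb_lt; [lra | apply Rdiv_lt_0_compat; lra]).
  assert (Hd1 : d <= 1) by apply Rmin_l.
  assert (HdL : d * L <= Rabs V0 / 2).
  { apply (Rle_trans _ (Rabs V0 / (2 * L) * L)); [apply Rmult_le_compat_r; [lra | apply Rmin_r]|].
    right; field; lra. }
  apply A_not_away_at_rho.
  apply (bounded_away_at_right_of_lyapunov A (fun r => V0 * horizon_energy r)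
           (fun r => V0 * horizon_energy_rate r) rho d (V0 ^ 2 / 2) (3 * V0 ^ 2 / 2) (Rabs V0 * Z));
    [lra | rewrite HV2; nra | apply Rmult_le_pos; lra | apply density_pos; lra |].
  intros r Hr. assert (HA := A_ge0 r ltac:(lra)).
  split; [apply is_derive_scal, horizon_energy_derive; lra|]. split.
  - assert (Hdev : Rabs (V0 * (horizon_energy r - V0 * A r)) <= V0 ^ 2 / 2 * A r).
    { rewrite Rabs_mult, HV2.
      apply (Rle_trans _ (Rabs V0 * (Rabs V0 / 2 * A r))); [|right; field].
      apply Rmult_le_compat_l; [lra|].
      eapply Rle_trans; [apply Hclose; lra|]. apply Rmult_le_compat_r; [lra|].
      apply (Rle_trans _ (d * L)); [apply Rmult_le_compat_r|]; lra. }
    apply Rabs_le_between in Hdev.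
    replace (V0 * horizon_energy r)
      with (V0 ^ 2 * A r + V0 * (horizon_energy r - V0 * A r)) by ring.
    lra.
  - eapply Rle_trans; [apply Rle_abs|]. rewrite Rabs_mult, (Rmult_assoc (Rabs V0)).
    apply Rmult_le_compat_l; [lra|]. apply Hrate; lra.
Qed.

Lemma potential_over_gap r : rho < r -> (omega * r ^ 2 + E * r) / (r - rho) = omega * r.
Proof.
  intros Hr. assert (HE : E = - omega * rho).
  { apply (Rmult_eq_reg_r rho); [|lra]. assert (HV := horizon_potential_vanishes). nra. }
  rewrite HE. field. lra.
Qed.

Definition mass_frequency_form (r : R) : R := 2 * m * B1 r + omega * A r.

Lemma mass_frequency_form_derive r : rho < r ->
  is_derive mass_frequency_form r (2 * lambda * (m * A r + 2 * omega * B1 r) / (r - rho)).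
Proof.
  intros Hr. eapply is_derive_replace.
  - apply is_derive_Rplus; apply is_derive_scal; [now apply B1_ode | now apply A_ode].
  - rewrite potential_over_gap by exact Hr. field. lra.
Qed.

(* [lambda (2 m B1 + omega A)] is nondecreasing: its derivative is
   [2 lambda^2 (m A + 2 omega B1) / (r - rho)] and [|2 omega B1| <= |omega| A <= m A]. *)
Lemma mass_frequency_form_vanishes : Rabs omega <= m ->
  forall r, rho < r -> mass_frequency_form r = 0.
Proof.
  intros Hom r Hr.
  assert (Hlam : 0 < Rabs lambda) by now apply Rabs_pos_lt.
  assert (Hz := zero_of_monotone_dominated (fun r => lambda * mass_frequency_form r)
                  (fun r => lambda * (2 * lambda * (m * A r + 2 * omega * B1 r) / (r - rho)))
                  (Rabs lambda * (Rabs omega + m))).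
  apply (Rmult_eq_reg_l lambda); [rewrite Rmult_0_r; apply Hz; auto | exact lambda_neq0].
  - apply Rmult_lt_0_compat; [lra | pose proof (Rabs_pos omega); lra].
  - intros t Ht. apply is_derive_scal. now apply mass_frequency_form_derive.
  - intros t Ht.
    assert (Hb := lincomb_abs_le t 0 (2 * omega) 0 Ht).
    rewrite Rabs_R0, Rabs_mult, (Rabs_pos_eq 2) in Hb by lra.
    apply Rabs_le_between in Hb. assert (HA := A_ge0 t Ht).
    assert (0 <= m * A t + 2 * omega * B1 t) by nra.
    replace (lambda * (2 * lambda * (m * A t + 2 * omega * B1 t) / (t - rho)))
      with (2 * (lambda * lambda) * (m * A t + 2 * omega * B1 t) / (t - rho)) by (field; lra).
    apply Rdiv_le_0_compat; [|lra]. apply Rmult_le_pos; [|lra]. nra.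
  - intros t Ht. unfold mass_frequency_form.
    replace (lambda * (2 * m * B1 t + omega * A t))
      with ((lambda * omega) * A t + (2 * lambda * m) * B1 t + 0 * B2 t) by ring.
    eapply Rle_trans; [now apply lincomb_abs_le|]. right.
    rewrite Rabs_R0, !Rabs_mult, (Rabs_pos_eq 2), (Rabs_pos_eq m) by lra. field.
Qed.

Lemma B1_eq_subcritical : Rabs omega <= m ->
  forall r, rho < r -> B1 r = - omega * A r / (2 * m).
Proof.
  intros Hom r Hr. assert (HH := mass_frequency_form_vanishes Hom r Hr).
  unfold mass_frequency_form in HH. field_simplify_eq; lra.
Qed.

(* [2 m B1 + omega A = 0] saturates [|B1| <= A / 2], which kills [B2]; then [A] solves a scalar
   linear equation. *)
Lemma no_bound_state_critical : Rabs omega = m -> False.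
Proof.
  intros Hom.
  assert (Hsq : omega ^ 2 = m ^ 2) by (rewrite <- Hom, pow2_abs; reflexivity).
  assert (HB1 := B1_eq_subcritical (Req_le _ _ Hom)).
  assert (HB2 : forall r, rho < r -> B2 r = 0).
  { intros r Hr. assert (Hb := B_bound r Hr). rewrite HB1 in Hb by exact Hr.
    replace ((- omega * A r / (2 * m)) ^ 2) with (A r ^ 2 / 4) in Hb
      by (field_simplify; [rewrite Hsq; field|]; lra).
    nra. }
  assert (Hlw : 0 < Rabs (lambda * omega)).
  { rewrite Rabs_mult. apply Rmult_lt_0_compat; [now apply Rabs_pos_lt | lra]. }
  assert (HA1 := density_pos (rho + 1) ltac:(lra)).
  assert (Hzero : - (lambda * omega) * A (rho + 1) = 0).
  { apply (zero_of_monotone_dominated (fun r => - (lambda * omega) * A r)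
             (fun r => - (lambda * omega) * ((4 * lambda * B1 r - 4 * m * r * B2 r) / (r - rho)))
             (Rabs (lambda * omega)) Hlw); [| | |lra].
    - intros t Ht. apply is_derive_scal. now apply A_ode.
    - intros t Ht. rewrite HB1, HB2 by exact Ht. assert (HA := A_ge0 t Ht).
      replace (- (lambda * omega)
                 * ((4 * lambda * (- omega * A t / (2 * m)) - 4 * m * t * 0) / (t - rho)))
        with (2 * (lambda * omega) ^ 2 * A t / (m * (t - rho))) by (field; lra).
      apply Rdiv_le_0_compat; [|apply Rmult_lt_0_compat; lra].
      apply Rmult_le_pos; [|exact HA]. assert (0 <= (lambda * omega) ^ 2) by apply pow2_ge_0. lra.
    - intros t Ht. rewrite Rabs_mult, Rabs_Ropp, (Rabs_pos_eq (A t)) by now apply A_ge0. lra. }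
  apply Rmult_integral in Hzero as [Hlw0|HA0]; [|lra].
  rewrite <- Rabs_Ropp, Hlw0, Rabs_R0 in Hlw. lra.
Qed.

Lemma no_bound_state_subcritical : Rabs omega < m -> False.
Proof.
  intros Hom. assert (Hr : rho < rho + 1) by lra.
  assert (HH := mass_frequency_form_vanishes (Rlt_le _ _ Hom) _ Hr).
  assert (HK := derive_of_vanishing _ rho _ _ Hr
                  (mass_frequency_form_vanishes (Rlt_le _ _ Hom))
                  (mass_frequency_form_derive _ Hr)).
  assert (HK' : m * A (rho + 1) + 2 * omega * B1 (rho + 1) = 0).
  { apply (Rmult_eq_reg_l (2 * lambda / (rho + 1 - rho))).
    - rewrite Rmult_0_r, <- HK. field. lra.
    - apply Rmult_integral_contrapositive; split; [lra | apply Rinv_neq_0_compat; lra]. }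
  assert (Hgap : 0 < m ^ 2 - omega ^ 2).
  { rewrite <- (pow2_abs omega). assert (0 <= Rabs omega) by apply Rabs_pos. nra. }
  assert (HA1 := density_pos _ Hr). unfold mass_frequency_form in HH.
  assert ((m ^ 2 - omega ^ 2) * A (rho + 1) = 0).
  { replace ((m ^ 2 - omega ^ 2) * A (rho + 1))
      with (m * (m * A (rho + 1) + 2 * omega * B1 (rho + 1))
            - omega * (2 * m * B1 (rho + 1) + omega * A (rho + 1))) by ring.
    rewrite HK', HH. ring. }
  assert (0 < (m ^ 2 - omega ^ 2) * A (rho + 1)) by now apply Rmult_lt_0_compat.
  lra.
Qed.

(* Unlike [mass_frequency_form], its derivative has no [1 / (r - rho)] term, only an [O(A / r^2)]
   one. *)
Definition supercritical_energy (r : R) : R :=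
  omega * mass_frequency_form r + 2 * omega * lambda * B2 r / r.

Lemma supercritical_energy_derive r : rho < r ->
  is_derive supercritical_energy r (- 2 * omega * lambda * B2 r / r ^ 2).
Proof.
  intros Hr. unfold supercritical_energy, Rdiv at 1. eapply is_derive_replace.
  - apply is_derive_Rplus; [apply is_derive_scal; now apply mass_frequency_form_derive|].
    apply (is_derive_Rmult (fun t => 2 * omega * lambda * B2 t) (fun t => / t)).
    + apply is_derive_scal. now apply B2_ode.
    + apply is_derive_inv; [apply is_derive_id | lra].
  - rewrite potential_over_gap by exact Hr. unfold one; simpl. field. lra.
Qed.

Lemma supercritical_energy_close r : rho < r ->
  Rabs (supercritical_energy r - omega ^ 2 * A r)
    <= (m * Rabs omega + Rabs (omega * lambda) / r) * A r.
Proof.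
  intros Hr.
  replace (supercritical_energy r - omega ^ 2 * A r)
    with (0 * A r + (2 * m * omega) * B1 r + (2 * (omega * lambda) / r) * B2 r)
    by (unfold supercritical_energy, mass_frequency_form; field; lra).
  eapply Rle_trans; [now apply lincomb_abs_le|]. right.
  rewrite Rabs_R0, Rabs_div, !Rabs_mult, (Rabs_pos_eq 2), (Rabs_pos_eq m), (Rabs_pos_eq r) by lra.
  field. lra.
Qed.

Lemma no_bound_state_supercritical : m < Rabs omega -> False.
Proof.
  intros Hom.
  set (D := omega ^ 2 - m * Rabs omega). set (W := Rabs (omega * lambda)).
  assert (HD : 0 < D).
  { unfold D. rewrite <- pow2_abs. assert (0 <= Rabs omega) by apply Rabs_pos. nra. }
  assert (HW : 0 <= W) by apply Rabs_pos.
  set (r0 := Rmax (rho + 1) (2 * W / D)).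
  assert (Hr0 : rho + 1 <= r0) by apply Rmax_l.
  assert (HWr0 : 2 * W / D <= r0) by apply Rmax_r.
  apply A_not_away_at_infty.
  apply (bounded_away_at_infty_of_lyapunov A supercritical_energy
           (fun r => - 2 * omega * lambda * B2 r / r ^ 2)
           r0 (D / 2) (omega ^ 2 + m * Rabs omega + W) W);
    [lra | lra | exact HW | apply density_pos; lra |].
  intros r Hr. assert (HA := A_ge0 r ltac:(lra)).
  split; [apply supercritical_energy_derive; lra|]. split.
  - assert (Hc := supercritical_energy_close r ltac:(lra)). fold W in Hc.
    apply Rabs_le_between in Hc.
    assert (HWr1 : W / r <= D / 2).
    { apply (Rmult_le_reg_r (2 * r / D)); [apply Rdiv_lt_0_compat; lra|].
      replace (W / r * (2 * r / D)) with (2 * W / D) by (field; lra).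
      replace (D / 2 * (2 * r / D)) with r by (field; lra). lra. }
    assert (HWr2 : W / r <= W).
    { apply (Rmult_le_reg_r r); [lra|]. replace (W / r * r) with W by (field; lra). nra. }
    assert (W / r * A r <= D / 2 * A r) by (apply Rmult_le_compat_r; lra).
    assert (W / r * A r <= W * A r) by (apply Rmult_le_compat_r; lra).
    unfold D in *. split; lra.
  - assert (Hr2 : 0 < r ^ 2) by (apply pow_lt; lra).
    assert (Hb := lincomb_abs_le r 0 0 (- (2 * (omega * lambda)) / r ^ 2) ltac:(lra)).
    rewrite Rabs_R0, Rabs_div, Rabs_Ropp, Rabs_mult, (Rabs_pos_eq 2), (Rabs_pos_eq (r ^ 2)) in Hb
      by lra.
    fold W in Hb. apply Rabs_le_between in Hb.
    replace (- 2 * omega * lambda * B2 r / r ^ 2)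
      with (0 * A r + 0 * B1 r + - (2 * (omega * lambda)) / r ^ 2 * B2 r) by (field; lra).
    replace (- (W * A r / r ^ 2)) with (- ((0 + (0 + 2 * W / r ^ 2) / 2) * A r)) by (field; lra).
    lra.
Qed.

Lemma no_radial_bound_state : False.
Proof.
  destruct (Rtotal_order (Rabs omega) m) as [Hlt|[Heq|Hgt]].
  - exact (no_bound_state_subcritical Hlt).
  - exact (no_bound_state_critical Heq).
  - exact (no_bound_state_supercritical Hgt).
Qed.

End RadialCore.

Lemma normsq2_ge0 (v : C * C) : 0 <= normsq2 v.
Proof.
  unfold normsq2. pose proof (pow2_ge_0 (Cmod (fst v))). pose proof (pow2_ge_0 (Cmod (snd v))).
  lra.
Qed.

Lemma radial_L2_not_away_at_horizon (rho a : R) (f : R -> C * C) : 0 < rho ->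
  radial_L2 rho a f -> ~ bounded_away_from_zero (at_right rho) (fun r => normsq2 (f r)).
Proof.
  intros Hrho HL2 [c [Hc Hnear]].
  refine (not_ex_RInt_gen_at_right _ rho (c * rho ^ 2) (Rbar_locally p_infty) _ _ HL2).
  { apply Rmult_lt_0_compat; [lra | apply pow_lt; lra]. }
  assert (Hclose : at_right rho (fun t => rho < t < rho + 1)).
  { apply at_right_iff. exists 1; split; [lra | easy]. }
  refine (filter_imp _ _ _ (filter_and _ _ Hnear Hclose)).
  intros t [HA [Ht1 Ht2]]. set (x := t - rho).
  assert (Hx2 : 0 < x ^ 2) by (apply pow_lt; unfold x; lra).
  apply (Rmult_le_reg_r (x ^ 2)); [exact Hx2|].
  replace (c * rho ^ 2 / x * x ^ 2) with (c * rho ^ 2 * x) by (unfold x; field; lra).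
  replace (normsq2 (f t) * (t ^ 2 + a ^ 2) / x ^ 2 * x ^ 2) with (normsq2 (f t) * (t ^ 2 + a ^ 2))
    by (unfold x; field; lra).
  assert (c * rho ^ 2 * x <= c * rho ^ 2).
  { rewrite <- (Rmult_1_r (c * rho ^ 2)) at 2. apply Rmult_le_compat_l; [|unfold x; lra].
    apply Rmult_le_pos; [lra | apply pow2_ge_0]. }
  assert (rho ^ 2 <= t ^ 2 + a ^ 2).
  { pose proof (pow2_ge_0 a). assert (rho ^ 2 <= t ^ 2) by (apply pow_incr; lra). lra. }
  assert (c * rho ^ 2 <= normsq2 (f t) * (t ^ 2 + a ^ 2))
    by (apply Rmult_le_compat; try apply pow2_ge_0; lra).
  lra.
Qed.

Lemma radial_L2_not_away_at_infty (rho a : R) (f : R -> C * C) : 0 < rho ->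
  radial_L2 rho a f -> ~ bounded_away_from_zero (Rbar_locally p_infty) (fun r => normsq2 (f r)).
Proof.
  intros Hrho HL2 [c [Hc Hnear]].
  refine (not_ex_RInt_gen_p_infty _ (at_right rho) _ HL2).
  exists c; split; [exact Hc|].
  assert (Hfar : Rbar_locally p_infty (fun t => rho < t)) by (exists rho; easy).
  refine (filter_imp _ _ _ (filter_and _ _ Hnear Hfar)). intros t [HA Ht].
  assert (Hx2 : 0 < (t - rho) ^ 2) by (apply pow_lt; lra).
  assert (1 <= (t ^ 2 + a ^ 2) / (t - rho) ^ 2).
  { apply (Rmult_le_reg_r ((t - rho) ^ 2)); [exact Hx2|].
    replace ((t ^ 2 + a ^ 2) / (t - rho) ^ 2 * (t - rho) ^ 2) with (t ^ 2 + a ^ 2) by (field; lra).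
    pose proof (pow2_ge_0 a). assert ((t - rho) ^ 2 <= t ^ 2) by (apply pow_incr; lra). lra. }
  unfold Rdiv. rewrite Rmult_assoc. fold ((t ^ 2 + a ^ 2) / (t - rho) ^ 2).
  rewrite <- (Rmult_1_r c). apply Rmult_le_compat; lra.
Qed.

Lemma Vpot_nonrotating (Q omega k e r : R) : Vpot 0 Q omega k e r = omega * r ^ 2 + e * Q * r.
Proof. unfold Vpot. ring. Qed.

Theorem mainTheorem7 :
  forall (M a Q : R), 0 < M -> M ^ 2 = a ^ 2 + Q ^ 2 ->
  a = 0 -> Q <> 0 -> M = Rabs Q ->
  forall (k : R), half_integer k ->
  forall (m e : R), 0 < m ->
  forall omega : R, ~ energy_eigenvalue M a Q m e k omega.
Proof.
  (* The extremality [M = |Q|] is already built into the radial system through [rho := M]. *)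
  intros M a Q HM _ Ha _ _ k Hk m e Hm omega
         [lambda [f [g [Hrad [[r1 [Hr1 Hf1]] [HL2 [Hang [Hg HgL2]]]]]]]].
  subst a.
  assert (Hlam : lambda <> 0).
  { intros ->. exact (nonrotating_angular_zero_not_L2 m k omega g Hk Hang Hg HgL2). }
  assert (Hode := radial_solution_quadratic_ode _ _ _ _ _ _ _ _ _ Hrad).
  apply (no_radial_bound_state M m lambda omega (e * Q) (fun r => normsq2 (f r))
           (fun r => Re (mixed_product (f r))) (fun r => Im (mixed_product (f r))) HM Hm Hlam).
  - intros r Hr. apply (Hode r Hr).
  - intros r Hr. rewrite <- Vpot_nonrotating with (k := k). apply (Hode r Hr).
  - intros r Hr. rewrite <- Vpot_nonrotating with (k := k). apply (Hode r Hr).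
  - intros r _. apply normsq2_ge0.
  - intros r _. apply mixed_product_bound.
  - exists r1. split; [exact Hr1 | now apply normsq2_pos].
  - now apply (radial_L2_not_away_at_horizon M 0).
  - now apply (radial_L2_not_away_at_infty M 0).
Qed.
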